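(* Let $p$ be a prime, let $n\geq 1$ and $k\geq 1$ be integers, and let $q$ be an integer with $\gcd(q,p)=1$. Let $\Gamma_{p,n,q}$ be the directed graph whose vertex set is $\mathbb{Z}_{p^n}=\{0,1,\dots,p^n-1\}$ and whose edge set is $$E=\{(x,\, q^y \bmod p^n)\;:\; x\in\mathbb{Z}_{p^n},\ y\in\mathbb{Z}_{\geq 0},\ y\equiv x \pmod{p^n}\}.$$ Let $C_{p,n,q}(k)$ be the number of $k$-cycles with marked initial vertex in $\Gamma_{p,n,q}$, i.e. the number of sequences $(x_0,x_1,\dots,x_{k-1})$ of vertices such that $(x_i,x_{i+1})\in E$ for $0\leq i\leq k-2$ and $(x_{k-1},x_0)\in E$ (equivalently, $C_{p,n,q}(k)=\mathrm{trace}(A^k)$ where $A$ is the adjacency matrix of $\Gamma_{p,n,q}$). Then $C_{p,n,q}(k)\leq (p-1)^k$. Moreover, if $q$ is a primitive root modulo $p$, then $C_{p,n,q}(k)=(p-1)^k$.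
   Context: Here $q^y \bmod p^n$ denotes the representative of $q^y$ modulo $p^n$ in $\{0,1,\dots,p^n-1\}$. A $k$-cycle with marked initial vertex is counted as a closed walk of length $k$ (vertices may repeat, loops are allowed). *)

From HB Require Import structures.
From mathcomp Require Import all_boot all_order all_algebra.
From mathcomp Require Import boolp.
Set Implicit Arguments. Unset Strict Implicit. Unset Printing Implicit Defensive.
Import Order.TTheory GRing.Theory Num.Theory.

Local Open Scope ring_scope.

Definition gamma_edge (p n : nat) (q : int) (x z : 'I_(p ^ n)) : Prop :=
  exists y : nat, (y = x %[mod p ^ n])%N /\
    (nat_of_ord z)%:Z = ((q ^+ y) %% (p ^ n)%N%:Z)%Z.

Definition num_cycles (p n : nat) (q : int) (k : nat) : nat :=
  #|[set f : {ffun 'I_k -> 'I_(p ^ n)} |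
      `[< forall i : 'I_k, @gamma_edge p n q (f i) (f (ordS i)) >] ]|.

Definition primitive_root_mod (p : nat) (q : int) : Prop :=
  (q ^+ (p.-1) = 1 %[mod p%:Z])%Z /\
  (forall m : nat, (0 < m < p.-1)%N -> (q ^+ m != 1 %[mod p%:Z])%Z).

From mathcomp Require Import all_boot all_order all_algebra.
From mathcomp Require Import cyclic zify boolp.
Set Implicit Arguments.
Unset Strict Implicit.
Unset Printing Implicit Defensive.
Import GRing.Theory Num.Theory.

(* Put a := q mod p^n.  Since a^y mod p^n only depends on y modulo p^n (p - 1),
   the edges leaving x are x -> a^c mod p^n, where c is the CRT lift of
   (x mod p^n, s mod p - 1), one for each label s < p - 1.  Hence a k-cycle is a
   fixed point of T_s : f |-> (i + 1 |-> a^c(f_i, s_i) mod p^n) for some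
   labelling s of its k steps.  As a^(p^j (p - 1)) = 1 mod p^(j+1), T_s maps
   functions congruent modulo p^j to functions congruent modulo p^(j+1): it is
   a p-adic contraction, with exactly one fixed point.  So there are at most
   (p - 1)^k cycles, and exactly that many when a has order p - 1 modulo p,
   because s_i is then recovered from the cycle as the discrete logarithm
   modulo p of its vertex i + 1. *)

Lemma expn_mod_period a m t e e' :
  a ^ t = 1 %[mod m] -> e = e' %[mod t] -> a ^ e = a ^ e' %[mod m].
Proof.
move=> a_t e_e'.
have reduce x : a ^ x = a ^ (x %% t) %[mod m].
  rewrite {1}(divn_eq x t) expnD expnM expnAC -modnMml -modnXm a_t modnXm exp1n.
  by rewrite modnMml mul1n.
by rewrite reduce e_e' -reduce.
Qed.

Lemma expn_totient_pfactor_mod p a j : prime p -> coprime a p ->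
  a ^ (p.-1 * p ^ j) = 1 %[mod p ^ j.+1].
Proof.
move=> p_pr a_p; rewrite -(totient_pfactor p_pr (ltn0Sn j)).
by rewrite Euler_exp_totient // coprimeXr.
Qed.

Lemma expn_mod_order_inj a d t c c' : 1 < d -> 0 < t -> coprime a d ->
  a ^ t = 1 %[mod d] -> (forall m, 0 < m < t -> a ^ m != 1 %[mod d]) ->
  a ^ c = a ^ c' %[mod d] -> c = c' %[mod t].
Proof.
move=> d_gt1 t_gt0 a_d a_t a_min.
wlog le_cc' : c c' / c <= c'.
  by move=> W; case: (leqP c c') => [|/ltnW] le E; [apply: W | apply/esym/W].
have a_gt0 : 0 < a.
  by case: a a_d {a_t a_min} => // /eqP; rewrite gcd0n => d1; rewrite d1 in d_gt1.
rewrite -(subnKC le_cc'); set e := c' - c => E.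
have : d %| a ^ c * (a ^ e - 1).
  rewrite mulnBr muln1 -expnD -eqn_mod_dvd; first by apply/eqP; rewrite -E.
  by rewrite expnD leq_pmulr // expn_gt0 a_gt0.
rewrite Gauss_dvdr; last by rewrite coprime_sym coprimeXl.
rewrite -eqn_mod_dvd ?expn_gt0 ?a_gt0 // => /eqP a_e.
have a_e_mod : a ^ (e %% t) = 1 %[mod d].
  by rewrite -a_e; apply: expn_mod_period a_t _; rewrite modn_mod.
have [e_t0|e_t_gt0] := posnP (e %% t); first by rewrite -modnDmr e_t0 addn0.
by have := a_min _ (introT andP (conj e_t_gt0 (ltn_pmod e t_gt0))); rewrite a_e_mod eqxx.
Qed.

Lemma modz_dvdm (q : int) (d M : nat) : (d %| M)%N ->
  ((q %% M%:Z)%Z %% d%:Z)%Z = (q %% d%:Z)%Z.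
Proof.
move/dvdnP=> [c ->]; rewrite [in RHS](divz_eq q (c * d)%:Z) PoszM mulrA.
by rewrite modzMDl.
Qed.

Lemma modz_exprz_residue (q : int) (d M m : nat) : (d %| M)%N -> (0 < M)%N ->
  (q ^+ m %% d%:Z)%Z = (`|(q %% M%:Z)%Z| ^ m %% d)%N.
Proof.
move=> dM M_gt0.
rewrite -modzXm -(modz_dvdm q dM) modzXm.
have -> : (q %% M%:Z)%Z = `|(q %% M%:Z)%Z|%N by rewrite gez0_abs // modz_ge0 //; lia.
by rewrite -modz_nat -[Posz (_ ^ _)]natz natrX natz.
Qed.

Lemma coprime_absz_modz (q : int) (d M : nat) : (d %| M)%N -> coprimez q d%:Z ->
  coprime `|(q %% M%:Z)%Z| d.
Proof.
move=> dM q_d; rewrite -[d in coprime _ d]absz_nat -coprimezE /coprimez.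
by rewrite -gcdz_modl modz_dvdm // gcdz_modl.
Qed.

Lemma coprime_pexp_pred p n : prime p -> coprime (p ^ n) p.-1.
Proof.
move=> p_pr; have := prime_gt1 p_pr => p_gt1.
by apply: coprimeXl; rewrite prime_coprime // gtnNdvd //; lia.
Qed.

Section PadicContraction.

Variables (I : finType) (b n : nat).
Variable F : {ffun I -> 'I_(b ^ n)} -> {ffun I -> 'I_(b ^ n)}.
Hypothesis F_contract : forall j (f g : {ffun I -> 'I_(b ^ n)}), j < n ->
  (forall i, f i = g i %[mod b ^ j]) -> forall i, F f i = F g i %[mod b ^ j.+1].

Lemma iter_contract_mod j (f g : {ffun I -> 'I_(b ^ n)}) :
  j <= n -> forall i, iter j F f i = iter j F g i %[mod b ^ j].
Proof.
elim: j => [|j IHj] le_jn i; first by rewrite expn0 !modn1.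
by rewrite !iterS; apply: F_contract => //; apply: IHj; apply: ltnW.
Qed.

Lemma eq_ffun_mod_pexp (f g : {ffun I -> 'I_(b ^ n)}) :
  (forall i, f i = g i %[mod b ^ n]) -> f = g.
Proof.
by move=> fg; apply/ffunP => i; apply/val_inj; have := fg i; rewrite !modn_small.
Qed.

Lemma contract_iter_fixed f0 : F (iter n F f0) = iter n F f0.
Proof. by apply: eq_ffun_mod_pexp; rewrite -iterS iterSr; apply: iter_contract_mod. Qed.

Lemma contract_fixed_uniq (f g : {ffun I -> 'I_(b ^ n)}) : F f = f -> F g = g -> f = g.
Proof.
move=> Ff Fg; apply: eq_ffun_mod_pexp.
have iter_fixed h m : F h = h -> iter m F h = h by move=> Fh; elim: m => //= m ->.
by rewrite -(iter_fixed f n Ff) -(iter_fixed g n Fg); apply: iter_contract_mod.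
Qed.

End PadicContraction.

Section CyclesOfGamma.

Variables (p n k : nat) (q : int).
Hypotheses (p_pr : prime p) (n_gt0 : 0 < n) (q_p : coprimez q p).

Let pn_gt0 : 0 < p ^ n. Proof. by rewrite expn_gt0 prime_gt0. Qed.
Let pn_pred_coprime : coprime (p ^ n) p.-1. Proof. exact: coprime_pexp_pred. Qed.
Let p_pn : p %| p ^ n. Proof. by rewrite -{1}(expn1 p) dvdn_exp2l. Qed.
Let p_pred_gt0 : 0 < p.-1. Proof. by rewrite -subn1 subn_gt0 prime_gt1. Qed.
Let a := `|(q %% (p ^ n)%:Z)%Z|.
Let a_p : coprime a p. Proof. exact: coprime_absz_modz q_p. Qed.

Definition cycle_step (s : nat) (x : 'I_(p ^ n)) : 'I_(p ^ n) :=
  Ordinal (ltn_pmod (a ^ chinese (p ^ n) p.-1 x s) pn_gt0).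

Lemma cycle_step_contract j s (x x' : 'I_(p ^ n)) : j < n -> x = x' %[mod p ^ j] ->
  cycle_step s x = cycle_step s x' %[mod p ^ j.+1].
Proof.
move=> lt_jn x_x'; have pj_pn : p ^ j.+1 %| p ^ n by rewrite dvdn_exp2l.
rewrite /= !(modn_dvdm _ pj_pn).
apply: (expn_mod_period (expn_totient_pfactor_mod j p_pr a_p)).
apply/eqP; rewrite mulnC (chinese_remainder (coprime_pexp_pred j p_pr)); apply/andP; split.
  have pj_pn' : p ^ j %| p ^ n by rewrite dvdn_exp2l // ltnW.
  rewrite -!(modn_dvdm (chinese _ _ _ _) pj_pn') !chinese_modl //.
  by rewrite !(modn_dvdm _ pj_pn') x_x'.
by rewrite !chinese_modr.
Qed.

Lemma gamma_edgeP (x z : 'I_(p ^ n)) :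
  gamma_edge q x z <-> exists s : 'I_(p.-1), z = cycle_step s x.
Proof.
have q_pow y : (q ^+ y %% (p ^ n)%:Z)%Z = (a ^ y %% p ^ n)%N.
  exact: modz_exprz_residue.
split=> [[y [y_x z_y]] | [s ->]]; last first.
  exists (chinese (p ^ n) p.-1 x s); split; last by rewrite q_pow.
  by rewrite chinese_modl.
exists (Ordinal (ltn_pmod y p_pred_gt0)); apply/val_inj => /=.
move: z_y; rewrite q_pow => -[->].
have period : a ^ (p.-1 * p ^ n) = 1 %[mod p ^ n].
  have pn_pSn : p ^ n %| p ^ n.+1 by rewrite dvdn_exp2l.
  by rewrite -[LHS](modn_dvdm _ pn_pSn) expn_totient_pfactor_mod // modn_dvdm.
apply: (expn_mod_period period); apply/eqP.
rewrite mulnC (chinese_remainder pn_pred_coprime); apply/andP; split.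
  by rewrite chinese_modl // y_x.
by rewrite chinese_modr // modn_mod.
Qed.

Definition cycle_map (s : {ffun 'I_k -> 'I_(p.-1)}) (f : {ffun 'I_k -> 'I_(p ^ n)}) :
  {ffun 'I_k -> 'I_(p ^ n)} :=
  [ffun i => cycle_step (s (ord_pred i)) (f (ord_pred i))].

Lemma cycle_map_ordS s f i : cycle_map s f (ordS i) = cycle_step (s i) (f i).
Proof. by rewrite ffunE ordSK. Qed.

Lemma cycle_map_contract s j (f g : {ffun 'I_k -> 'I_(p ^ n)}) : j < n ->
  (forall i, f i = g i %[mod p ^ j]) ->
  forall i, cycle_map s f i = cycle_map s g i %[mod p ^ j.+1].
Proof. by move=> lt_jn fg i; rewrite !ffunE; apply: cycle_step_contract. Qed.

Definition labelled_cycle (s : {ffun 'I_k -> 'I_(p.-1)}) : {ffun 'I_k -> 'I_(p ^ n)} :=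
  iter n (cycle_map s) [ffun => Ordinal pn_gt0].

Lemma labelled_cycle_fixed s : cycle_map s (labelled_cycle s) = labelled_cycle s.
Proof. exact/contract_iter_fixed/cycle_map_contract. Qed.

Lemma gamma_cycles_labelled :
  [set f : {ffun 'I_k -> 'I_(p ^ n)} | `[< forall i, gamma_edge q (f i) (f (ordS i)) >] ] =
  labelled_cycle @: [set: {ffun 'I_k -> 'I_(p.-1)}].
Proof.
apply/setP => f; rewrite inE; apply/asboolP/imsetP => [f_cycle | [s _ ->] i].
  have [s f_s] := fin_all_exists (fun i => (gamma_edgeP _ _).1 (f_cycle i)).
  exists (finfun s); rewrite ?inE //.
  apply: (contract_fixed_uniq (cycle_map_contract (finfun s))); last first.
    exact: labelled_cycle_fixed.
  by apply/ffunP => i; rewrite -{2}(ord_predK i) f_s !ffunE.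
apply/gamma_edgeP; exists (s i).
by rewrite -cycle_map_ordS labelled_cycle_fixed.
Qed.

Hypothesis q_prim : primitive_root_mod p q.

Let a_order :
  a ^ p.-1 = 1 %[mod p] /\ forall m, 0 < m < p.-1 -> a ^ m != 1 %[mod p].
Proof.
have q_pow m : (q ^+ m %% p%:Z)%Z = (a ^ m %% p)%N by apply: modz_exprz_residue.
case: q_prim => q_order q_min; split.
  by move: q_order; rewrite q_pow modz_nat => -[].
by move=> m /q_min; rewrite q_pow modz_nat; apply: contra => /eqP ->.
Qed.

Lemma cycle_step_label_inj (s s' : 'I_(p.-1)) x :
  cycle_step s x = cycle_step s' x -> s = s'.
Proof.
move=> /(congr1 (fun y : 'I_(p ^ n) => val y %% p)) /=; rewrite !(modn_dvdm _ p_pn).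
move=> /(expn_mod_order_inj (prime_gt1 p_pr) p_pred_gt0 a_p a_order.1 a_order.2).
by rewrite !chinese_modr // !modn_small // => /val_inj.
Qed.

Lemma labelled_cycle_inj : injective labelled_cycle.
Proof.
move=> s s' ss'; apply/ffunP => i.
apply: (@cycle_step_label_inj _ _ (labelled_cycle s i)).
by rewrite -!cycle_map_ordS {2}ss' !labelled_cycle_fixed ss'.
Qed.

End CyclesOfGamma.

Theorem theorem1 (p n k : nat) (q : int) :
  prime p -> (1 <= n)%N -> (1 <= k)%N -> coprimez q p%:Z ->
  (num_cycles p n q k <= (p.-1) ^ k)%N /\
  (primitive_root_mod p q -> num_cycles p n q k = (p.-1) ^ k).
Proof.
move=> p_pr n_gt0 _ q_p.
have card_labels : #|[set: {ffun 'I_k -> 'I_(p.-1)}]| = p.-1 ^ k.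
  by rewrite cardsT card_ffun !card_ord.
rewrite /num_cycles (gamma_cycles_labelled k p_pr n_gt0 q_p) -card_labels.
split; first exact: leq_imset_card.
by move=> q_prim; rewrite card_imset //; apply: labelled_cycle_inj.
Qed.
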